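(* Let $\mathfrak K$ be a diagram category and let $\mathcal G(\mathfrak K)$ be the graph whose vertex set is $\bigsqcup_{D\in\mathfrak K}\mathcal V(D)$ and whose edges are of two types: I0-edges $v\,f_*(v)$ for every elementary morphism $f\colon D\to D'$ and $v\in dom(f_* )$, and I2-edges $v_1v_2$ for every pair of crossings $v_1,v_2$ of a diagram $D$ to which a decreasing second Reidemeister move can be applied; let $\mathcal G_0(\mathfrak K)$ be obtained by deleting all I2-edges. Then: (1) the coefficient set of the universal index $\iota^u$ can be identified with the set of connected components of $\mathcal G(\mathfrak K)$, $\iota^u$ mapping a crossing to its component; (2) the coefficient set of the universal trait $\theta^u$ can be identified with the set of connected components of $\mathcal G_0(\mathfrak K)$, $\theta^u$ mapping a crossing to its component; (3) for crossings $v,v'$, $\sigma^u(v)=\sigma^u(v')$ iff $v$ and $v'$ are connected in $\mathcal G(\mathfrak K)$ by a path with an even number of I2-edges, and $\sigma^u(v)^\ast=\sigma^u(v')$ iff they are connected by a path with an odd number of I2-edges, where $\sigma^u$ is the universal signed index.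
   Context: A diagram category $\mathfrak K$ is either the category of diagrams of a fixed oriented tangle with numbered components (virtual, flat, free, in a fixed surface, flat in a fixed surface, or classical), or a union of such categories over all tangles of a given type. Morphisms are formal compositions of elementary morphisms: isotopies, diagram isomorphisms, Reidemeister moves. $\mathcal V(D)$ is the set of crossings; for a morphism $f$, $f_*\colon dom(f_* )\to im(f_* )$ is the bijection between crossings surviving $f$ and their images. A trait with coefficients in $\Theta$ is a map $\theta\colon\bigsqcup_D\mathcal V(D)\to\Theta$ with (I0) $\theta(f_*(v))=\theta(v)$ for elementary $f$, $v\in dom(f_* )$. An index is a trait with (I2) $\iota(v_1)=\iota(v_2)$ whenever a decreasing second Reidemeister move applies to $v_1,v_2$. A signed index with coefficients in a set $S$ with involution $\ast$ is a trait with (I2+) $\sigma(v_1)=\sigma(v_2)^\ast$ for such pairs. The universal trait/index is one through which every trait/index factors uniquely via a map of coefficient sets; the universal signed index $\sigma^u$ is one through which every signed index factors uniquely via an involution-commuting map. *)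

(* Abstract presentation of a diagram category: only the data
   the proposition depends on (crossings, the partial bijections f_* of
   elementary morphisms, and the pairs of crossings admitting a decreasing
   second Reidemeister move) is recorded. *)
Set Implicit Arguments.
Unset Strict Implicit.

Record DiagCat := {
  diagram : Type;
  crossing : diagram -> Type;
  elem : Type;
  esrc : elem -> diagram;
  etgt : elem -> diagram;
  (* f_* : dom(f_* ) -> im(f_* ), as a partial map V(D) -> V(D') *)
  fstar : forall f : elem, crossing (esrc f) -> option (crossing (etgt f));
  (* r2dec D v1 v2 : a decreasing second Reidemeister move applies to v1,v2 *)
  r2dec : forall D : diagram, crossing D -> crossing D -> Prop
}.

Arguments crossing {d} D.
Arguments elem d : assert.
Arguments esrc {d} f.
Arguments etgt {d} f.
Arguments fstar {d} f v.
Arguments r2dec {d} D v1 v2.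

Definition Xing (K : DiagCat) : Type := {D : diagram K & crossing D}.

Definition I0edge (K : DiagCat) (x y : Xing K) : Prop :=
  exists (f : elem K) (v : crossing (esrc f)) (w : crossing (etgt f)),
    fstar f v = Some w /\
    x = existT _ (esrc f) v /\ y = existT _ (etgt f) w.

Definition I2edge (K : DiagCat) (x y : Xing K) : Prop :=
  exists (D : diagram K) (v1 v2 : crossing D),
    r2dec D v1 v2 /\ x = existT _ D v1 /\ y = existT _ D v2.

(* ppath x y b : there is a path from x to y in G(K) (undirected edges)
   whose number of I2-edges has parity b (false = even, true = odd). *)
Inductive ppath (K : DiagCat) : Xing K -> Xing K -> bool -> Prop :=
| pp_refl x : ppath x x false
| pp_I0 x y z b : (I0edge x y \/ I0edge y x) -> ppath y z b -> ppath x z b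
| pp_I2 x y z b : (I2edge x y \/ I2edge y x) -> ppath y z b -> ppath x z (negb b).

Definition connG (K : DiagCat) (x y : Xing K) : Prop := exists b, ppath x y b.

Inductive connG0 (K : DiagCat) : Xing K -> Xing K -> Prop :=
| c0_refl x : connG0 x x
| c0_I0 x y z : (I0edge x y \/ I0edge y x) -> connG0 y z -> connG0 x z.

Definition is_trait (K : DiagCat) (Th : Type) (th : Xing K -> Th) : Prop :=
  forall (f : elem K) (v : crossing (esrc f)) (w : crossing (etgt f)),
    fstar f v = Some w ->
    th (existT _ (esrc f) v) = th (existT _ (etgt f) w).

Definition is_index (K : DiagCat) (Th : Type) (th : Xing K -> Th) : Prop :=
  is_trait th /\
  forall (D : diagram K) (v1 v2 : crossing D), r2dec D v1 v2 ->
    th (existT _ D v1) = th (existT _ D v2).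

Definition is_signed_index (K : DiagCat) (S : Type) (star : S -> S)
  (sg : Xing K -> S) : Prop :=
  (forall s, star (star s) = s) /\
  is_trait sg /\
  forall (D : diagram K) (v1 v2 : crossing D), r2dec D v1 v2 ->
    sg (existT _ D v1) = star (sg (existT _ D v2)).

Definition is_universal_trait (K : DiagCat) (Th : Type) (th : Xing K -> Th)
  : Prop :=
  is_trait th /\
  forall (Th' : Type) (th' : Xing K -> Th'), is_trait th' ->
    exists! g : Th -> Th', forall x, th' x = g (th x).

Definition is_universal_index (K : DiagCat) (Th : Type) (th : Xing K -> Th)
  : Prop :=
  is_index th /\
  forall (Th' : Type) (th' : Xing K -> Th'), is_index th' ->
    exists! g : Th -> Th', forall x, th' x = g (th x).

Definition is_universal_signed_index (K : DiagCat) (S : Type) (star : S -> S)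
  (sg : Xing K -> S) : Prop :=
  is_signed_index star sg /\
  forall (S' : Type) (star' : S' -> S') (sg' : Xing K -> S'),
    is_signed_index star' sg' ->
    exists! g : S -> S',
      (forall s, g (star s) = star' (g s)) /\ (forall x, sg' x = g (sg x)).

(* Each universal object is a quotient by a connectivity relation.  A trait
   is exactly a map constant along I0-edges, so it is constant on the
   components of G_0, and the map to the set of components is itself a trait;
   hence that map is universal, and any universal trait is isomorphic to it.
   The same holds for indices and G.  For signed indices one passes to the
   double cover of G with vertices (v, parity): (v, a) and (v', b) are
   identified when some path from v to v' has a + b mod 2 I2-edges, and the
   involution flips the parity. *)

From Stdlib Require Import Bool RelationClasses.
From Stdlib Require Import ClassicalEpsilon FunctionalExtensionality.
From Stdlib Require Import PropExtensionality ProofIrrelevance.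
Set Implicit Arguments.
Unset Strict Implicit.

Section Quotient.

Variables (A : Type) (R : A -> A -> Prop).
Hypothesis R_equiv : Equivalence R.
#[local] Existing Instance R_equiv.

Definition quot : Type := {P : A -> Prop | exists a, P = R a}.

Definition class_of (a : A) : quot := exist _ (R a) (ex_intro _ a eq_refl).

Lemma class_of_surj (q : quot) : exists a, class_of a = q.
Proof. destruct q as [P [a ->]]. exists a. reflexivity. Qed.

Lemma class_of_eq (a b : A) : class_of a = class_of b <-> R a b.
Proof.
  split.
  - intro Eab. assert (E : R a = R b) by exact (f_equal (@proj1_sig _ _) Eab).
    rewrite E. reflexivity.
  - intro Rab. assert (E : R a = R b).
    { apply functional_extensionality; intro c.
      apply propositional_extensionality.
      split; intro; [symmetry in Rab|]; etransitivity; eassumption. }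
    exact (subset_eq_compat _ _ _ _ _ _ E).
Qed.

Definition quot_lift (B : Type) (h : A -> B) (q : quot) : B :=
  h (proj1_sig (constructive_indefinite_description _ (class_of_surj q))).

Lemma quot_lift_class (B : Type) (h : A -> B) :
  (forall a b, R a b -> h a = h b) -> forall a, quot_lift h (class_of a) = h a.
Proof.
  intros h_inv a. unfold quot_lift.
  destruct constructive_indefinite_description as [a' Ea']; simpl.
  apply h_inv. exact (proj1 (class_of_eq a' a) Ea').
Qed.

Lemma quot_factor (B : Type) (h : A -> B) :
  (forall a b, R a b -> h a = h b) ->
  exists! g : quot -> B, forall a, h a = g (class_of a).
Proof.
  intro h_inv. exists (quot_lift h). split.
  - intro a. symmetry. exact (quot_lift_class h_inv a).
  - intros g Hg. apply functional_extensionality; intro q.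
    destruct (class_of_surj q) as [a <-]. rewrite <- Hg.
    exact (quot_lift_class h_inv a).
Qed.

End Quotient.

Section Universal.

Variables (A : Type) (P : forall T : Type, (A -> T) -> Prop).

Definition universal (Th : Type) (th : A -> Th) : Prop :=
  P th /\
  forall (Th' : Type) (th' : A -> Th'), P th' ->
    exists! g : Th -> Th', forall x, th' x = g (th x).

(* Both the constant [True] and "lies in the image of [th]" factor the constant
   map [True] through [th], so uniqueness identifies them. *)
Lemma universal_surj (Th : Type) (th : A -> Th) :
  P (fun _ : A => True) -> universal th -> forall t, exists x, th x = t.
Proof.
  intros P_const [_ th_univ] t.
  destruct (th_univ _ _ P_const) as [g [_ g_unique]].
  assert (E1 : g = fun _ => True) by (apply g_unique; reflexivity).
  assert (E2 : g = fun t => exists x, th x = t).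
  { apply g_unique. intro x. apply propositional_extensionality. split; eauto. }
  change ((fun t => exists x, th x = t) t). rewrite <- E2, E1. exact I.
Qed.

Variable R : A -> A -> Prop.
Hypothesis R_equiv : Equivalence R.
Hypothesis P_invariant :
  forall (T : Type) (t : A -> T), P t -> forall x y, R x y -> t x = t y.
Hypothesis P_class_of : P (class_of R).

Lemma universal_class_of : universal (class_of R).
Proof.
  split; [exact P_class_of|].
  intros Th' th' P_th'. exact (quot_factor R_equiv (P_invariant P_th')).
Qed.

Lemma universal_eq_iff (Th : Type) (th : A -> Th) :
  universal th -> forall x y, th x = th y <-> R x y.
Proof.
  intros [P_th th_univ] x y. split.
  - intro Exy. destruct (th_univ _ _ P_class_of) as [g [Hg _]].
    apply (class_of_eq R_equiv). rewrite !Hg, Exy. reflexivity.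
  - exact (@P_invariant _ _ P_th x y).
Qed.

End Universal.

Section Graph.

Variable K : DiagCat.

Lemma I0edge_intro (f : elem K) (v : crossing (esrc f)) (w : crossing (etgt f)) :
  fstar f v = Some w -> I0edge (existT _ (esrc f) v) (existT _ (etgt f) w).
Proof. intro E. exists f, v, w. auto. Qed.

Lemma I2edge_intro (D : diagram K) (v1 v2 : crossing D) :
  r2dec D v1 v2 -> I2edge (existT _ D v1) (existT _ D v2).
Proof. intro E. exists D, v1, v2. auto. Qed.

Lemma ppath_I0 (x y : Xing K) : I0edge x y -> ppath x y false.
Proof. intro E. apply pp_I0 with y; [left; exact E | constructor]. Qed.

Lemma ppath_I2 (x y : Xing K) : I2edge x y -> ppath x y true.
Proof. intro E. exact (pp_I2 (or_introl E) (pp_refl y)). Qed.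

Lemma ppath_trans (x y z : Xing K) (a b : bool) :
  ppath x y a -> ppath y z b -> ppath x z (xorb a b).
Proof.
  intro Hxy; revert z b; induction Hxy as [|x y z' a E _ IH|x y z' a E _ IH];
    intros z b Hyz.
  - exact Hyz.
  - exact (pp_I0 E (IH _ _ Hyz)).
  - rewrite <- negb_xorb_l. exact (pp_I2 E (IH _ _ Hyz)).
Qed.

Lemma ppath_sym (x y : Xing K) (b : bool) : ppath x y b -> ppath y x b.
Proof.
  induction 1 as [x|x y z b E _ IH|x y z b E _ IH].
  - constructor.
  - rewrite <- (xorb_false_r b). apply (ppath_trans IH).
    apply pp_I0 with x; [tauto | constructor].
  - rewrite <- xorb_true_r. apply (ppath_trans IH).
    refine (pp_I2 _ (pp_refl x)); tauto.
Qed.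

#[export] Instance connG_equiv : Equivalence (@connG K).
Proof.
  split.
  - intro x. exists false. constructor.
  - intros x y [b H]. exists b. exact (ppath_sym H).
  - intros x y z [a H] [b H']. exists (xorb a b). exact (ppath_trans H H').
Qed.

Lemma connG0_trans (x y z : Xing K) : connG0 x y -> connG0 y z -> connG0 x z.
Proof. induction 1 as [|x y z' E _ IH]; intro Hyz; [exact Hyz | exact (c0_I0 E (IH Hyz))]. Qed.

#[export] Instance connG0_equiv : Equivalence (@connG0 K).
Proof.
  split.
  - intro x. constructor.
  - intros x y. induction 1 as [|x y z E _ IH]; [constructor|].
    apply (connG0_trans IH). apply c0_I0 with x; [tauto | constructor].
  - intros x y z. exact (@connG0_trans x y z).
Qed.

Lemma is_trait_I0edge (Th : Type) (th : Xing K -> Th) :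
  is_trait th -> forall x y, I0edge x y -> th x = th y.
Proof. intros th_trait x y (f & v & w & E & -> & ->). exact (th_trait f v w E). Qed.

Lemma is_trait_connG0 (Th : Type) (th : Xing K -> Th) :
  is_trait th -> forall x y, connG0 x y -> th x = th y.
Proof.
  intros th_trait x y. induction 1 as [|x y z E _ IH]; [reflexivity|].
  rewrite <- IH. destruct E as [E|E]; [|symmetry]; exact (is_trait_I0edge th_trait E).
Qed.

Lemma is_index_I2edge (Th : Type) (th : Xing K -> Th) :
  is_index th -> forall x y, I2edge x y -> th x = th y.
Proof. intros [_ th_r2] x y (D & v1 & v2 & E & -> & ->). exact (th_r2 D v1 v2 E). Qed.

Lemma is_index_connG (Th : Type) (th : Xing K -> Th) :
  is_index th -> forall x y, connG x y -> th x = th y.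
Proof.
  intros th_index x y [b H]. induction H as [x|x y z b E _ IH|x y z b E _ IH];
    [reflexivity | rewrite <- IH ..].
  - destruct E as [E|E]; [|symmetry]; exact (is_trait_I0edge (proj1 th_index) E).
  - destruct E as [E|E]; [|symmetry]; exact (is_index_I2edge th_index E).
Qed.

Lemma is_signed_index_I2edge (S : Type) (star : S -> S) (sg : Xing K -> S) :
  is_signed_index star sg -> forall x y, I2edge x y -> sg y = star (sg x).
Proof.
  intros [star_invol [_ sg_r2]] x y (D & v1 & v2 & E & -> & ->).
  rewrite (sg_r2 D v1 v2 E). symmetry. apply star_invol.
Qed.

Lemma is_signed_index_ppath (S : Type) (star : S -> S) (sg : Xing K -> S) :
  is_signed_index star sg ->
  forall x y b, ppath x y b -> sg y = if b then star (sg x) else sg x.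
Proof.
  intros sg_signed x y b.
  pose proof (is_trait_I0edge (proj1 (proj2 sg_signed))) as sg_I0.
  pose proof (is_signed_index_I2edge sg_signed) as sg_I2.
  assert (star_invol : forall s, star (star s) = s) by apply sg_signed.
  induction 1 as [x|x y z b E _ IH|x y z b E _ IH]; [reflexivity| |]; rewrite IH.
  - destruct E as [E|E]; rewrite (sg_I0 _ _ E); reflexivity.
  - destruct E as [E|E]; rewrite (sg_I2 _ _ E), ?star_invol;
      destruct b; simpl; rewrite ?star_invol; reflexivity.
Qed.

Lemma is_index_class_of_connG : is_index (class_of (@connG K)).
Proof.
  split.
  - intros f v w E. apply (class_of_eq connG_equiv).
    exists false. exact (ppath_I0 (I0edge_intro E)).
  - intros D v1 v2 E. apply (class_of_eq connG_equiv).
    exists true. exact (ppath_I2 (I2edge_intro E)).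
Qed.

Lemma is_trait_class_of_connG0 : is_trait (class_of (@connG0 K)).
Proof.
  intros f v w E. apply (class_of_eq connG0_equiv).
  apply c0_I0 with (existT _ (etgt f) w); [left; exact (I0edge_intro E) | constructor].
Qed.

Definition parity_conn (p q : Xing K * bool) : Prop :=
  ppath (fst p) (fst q) (xorb (snd p) (snd q)).

#[export] Instance parity_conn_equiv : Equivalence parity_conn.
Proof.
  unfold parity_conn. split.
  - intros [x a]. simpl. rewrite xorb_nilpotent. constructor.
  - intros [x a] [y b] H. simpl in *. rewrite xorb_comm. exact (ppath_sym H).
  - intros [x a] [y b] [z c] H H'. simpl in *.
    replace (xorb a c) with (xorb (xorb a b) (xorb b c))
      by (destruct a, b, c; reflexivity).
    exact (ppath_trans H H').
Qed.

Definition signed_class (x : Xing K) : quot parity_conn := class_of parity_conn (x, false).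

Definition flip_parity (p : Xing K * bool) : quot parity_conn :=
  class_of parity_conn (fst p, negb (snd p)).

Definition flip_class : quot parity_conn -> quot parity_conn := quot_lift flip_parity.

Lemma flip_class_of (x : Xing K) (a : bool) :
  flip_class (class_of parity_conn (x, a)) = class_of parity_conn (x, negb a).
Proof.
  apply (quot_lift_class parity_conn_equiv (h := flip_parity)).
  intros [y b] [z c] H. apply (class_of_eq parity_conn_equiv).
  unfold parity_conn in *; simpl in *. rewrite xorb_negb_negb. exact H.
Qed.

Lemma is_signed_index_signed_class : is_signed_index flip_class signed_class.
Proof.
  split; [|split].
  - intro s. destruct (class_of_surj s) as [[x a] <-].
    rewrite !flip_class_of, negb_involutive. reflexivity.
  - intros f v w E. apply (class_of_eq parity_conn_equiv).
    exact (ppath_I0 (I0edge_intro E)).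
  - intros D v1 v2 E. unfold signed_class. rewrite flip_class_of.
    apply (class_of_eq parity_conn_equiv). exact (ppath_I2 (I2edge_intro E)).
Qed.

Lemma universal_signed_class : is_universal_signed_index flip_class signed_class.
Proof.
  split; [exact is_signed_index_signed_class|].
  intros S star sg sg_signed.
  set (h := fun p : Xing K * bool => if snd p then star (sg (fst p)) else sg (fst p)).
  assert (h_inv : forall p q, parity_conn p q -> h p = h q).
  { intros [x a] [y b] H. apply (is_signed_index_ppath sg_signed) in H.
    destruct sg_signed as [star_invol _]. unfold h; simpl in *.
    destruct a, b; simpl in H; rewrite H, ?star_invol; reflexivity. }
  pose proof (quot_lift_class parity_conn_equiv h_inv) as h_class.
  exists (quot_lift h). split; [split|].
  - intro s. destruct (class_of_surj s) as [[x a] <-].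
    rewrite flip_class_of, !h_class. unfold h; simpl.
    destruct a; simpl; [symmetry; apply sg_signed | reflexivity].
  - intro x. unfold signed_class. rewrite h_class. reflexivity.
  - intros g [g_star g_sg]. apply functional_extensionality; intro q.
    destruct (class_of_surj q) as [[x [|]] <-]; rewrite h_class; unfold h; simpl.
    + rewrite g_sg, <- g_star. unfold signed_class. rewrite flip_class_of. reflexivity.
    + apply g_sg.
Qed.

Lemma universal_signed_index_ppath (S : Type) (star : S -> S) (sg : Xing K -> S) :
  is_universal_signed_index star sg ->
  forall x y (b : bool), (if b then star (sg x) else sg x) = sg y <-> ppath x y b.
Proof.
  intros [sg_signed sg_univ] x y b. split.
  - destruct (sg_univ _ _ _ is_signed_index_signed_class) as [g [[g_star g_sg] _]].
    intro E.
    assert (Ec : class_of parity_conn (y, false) = class_of parity_conn (x, b)).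
    { change (signed_class y = class_of parity_conn (x, b)).
      rewrite g_sg, <- E. destruct b; rewrite ?g_star, <- g_sg; unfold signed_class;
        rewrite ?flip_class_of; reflexivity. }
    apply (class_of_eq parity_conn_equiv) in Ec.
    apply ppath_sym. exact Ec.
  - intro H. symmetry. exact (is_signed_index_ppath sg_signed H).
Qed.

End Graph.

Theorem proposition6 (K : DiagCat) :
  (* (1) the universal index exists and its coefficient set is the set of
     connected components of G(K), the index mapping a crossing to its
     component *)
  ((exists (Th : Type) (th : Xing K -> Th), is_universal_index th) /\
   (forall (Th : Type) (th : Xing K -> Th), is_universal_index th ->
      (forall t : Th, exists x, th x = t) /\
      (forall x y, th x = th y <-> connG x y))) /\
  (* (2) same for the universal trait and G_0(K) *)
  ((exists (Th : Type) (th : Xing K -> Th), is_universal_trait th) /\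
   (forall (Th : Type) (th : Xing K -> Th), is_universal_trait th ->
      (forall t : Th, exists x, th x = t) /\
      (forall x y, th x = th y <-> connG0 x y))) /\
  (* (3) universal signed index and parity of I2-edges along paths *)
  ((exists (S : Type) (star : S -> S) (sg : Xing K -> S),
       is_universal_signed_index star sg) /\
   (forall (S : Type) (star : S -> S) (sg : Xing K -> S),
      is_universal_signed_index star sg ->
      forall x y,
        (sg x = sg y <-> ppath x y false) /\
        (star (sg x) = sg y <-> ppath x y true))).
Proof.
  pose (P_index := fun (T : Type) (t : Xing K -> T) => is_index t).
  pose (P_trait := fun (T : Type) (t : Xing K -> T) => is_trait t).
  assert (index_const : P_index Prop (fun _ => True)) by (split; intros ? ? ? ?; reflexivity).
  assert (trait_const : P_trait Prop (fun _ => True)) by (intros ? ? ? ?; reflexivity).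
  pose proof (@is_index_connG K) as index_inv.
  pose proof (@is_trait_connG0 K) as trait_inv.
  pose proof (@is_index_class_of_connG K) as index_class.
  pose proof (@is_trait_class_of_connG0 K) as trait_class.
  split; [|split]; split.
  - exists (quot (@connG K)), (class_of (@connG K)).
    exact (universal_class_of (@connG_equiv K) index_inv index_class).
  - intros Th th th_univ. split.
    + exact (universal_surj index_const th_univ).
    + exact (universal_eq_iff (@connG_equiv K) index_inv index_class th_univ).
  - exists (quot (@connG0 K)), (class_of (@connG0 K)).
    exact (universal_class_of (@connG0_equiv K) trait_inv trait_class).
  - intros Th th th_univ. split.
    + exact (universal_surj trait_const th_univ).
    + exact (universal_eq_iff (@connG0_equiv K) trait_inv trait_class th_univ).
  - exists (quot (@parity_conn K)), (@flip_class K), (@signed_class K).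
    exact (@universal_signed_class K).
  - intros S star sg sg_univ x y. split.
    + exact (universal_signed_index_ppath sg_univ x y false).
    + exact (universal_signed_index_ppath sg_univ x y true).
Qed.
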